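(* Let $M\subseteq V$ and let $SB$ be any satellite bridge for $M$. Then there exist a tree $R$ in $G$ with $M\subseteq N(R)$ and a function $F$ defined on $d^+(R)$ with values in $2^{\{1,\dots,K\}}$ such that (1) for every $u\in d^+(R)$, $F(u)$ is a hitting set of $\{\Gamma(v): v\in nb_R(u)\}$, and (2) $\sum_{u\in d^+(R)}|F(u)|\le |N(SB)|$.
   Context: Let $G=(V,E)$ be a finite, simple, undirected, connected graph with $|V|\ge 2$. Fix a positive integer $K$ and, for every $u\in V$, a nonempty set $\Gamma(u)\subseteq\{1,\dots,K\}$. Let $nb_G(u)$ be the neighbours of $u$ in $G$. For a tree $T$, $N(T)$ is its vertex set, $nb_T(u)$ the neighbours of $u$ in $T$, and $d^+(T)$ the set of vertices of degree greater than one in $T$. A hitting set of a collection $\mathcal C$ of subsets of a finite set $\mathcal F$ is a subset of $\mathcal F$ meeting every member of $\mathcal C$. The extended graph $\widetilde G=(\widetilde V,\widetilde E)$ of $G$: (i) initially $\widetilde V=V$, $\widetilde E=\emptyset$; (ii) for each $u\in V$ and each $i\in\bigcup_{v\in nb_G(u)}\Gamma(v)$, add a new vertex $\lambda(u,i)$ (satellite node of $u$; $u$ is its nuclear node); $\Psi(u)$ is the set of satellite nodes of $u$; (iii) for each $u\in V$, join every pair of distinct vertices of $\Psi(u)\cup\{u\}$; (iv) for each edge $\{u,v\}\in E$ (in each orientation $(u,v)$), each $i\in\Gamma(v)$, $j\in\Gamma(u)$, add edges $\{\lambda(u,i),\lambda(v,j)\}$, $\{\lambda(u,i),v\}$, $\{u,\lambda(v,j)\}$.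 $V_S=\widetilde V\setminus V$ is the set of satellite nodes. Given $M\subseteq V$, a satellite bridge is a (nonempty) subtree $SB$ of $\widetilde G$ all of whose vertices are satellite nodes and such that every vertex of $M$ is adjacent in $\widetilde G$ to at least one vertex of $SB$. *)

From mathcomp Require Import all_boot.
Set Implicit Arguments. Unset Strict Implicit. Unset Printing Implicit Defensive.

(* A subgraph is given by a vertex set Nd and a set Ed of unordered edges,
   each edge being a 2-element set [set x; y]. *)
Definition tadj (T : finType) (Ed : {set {set T}}) : rel T :=
  fun x y => [set x; y] \in Ed.

(* (Nd, Ed) is a tree in the graph with adjacency e: nonempty, every edge is
   an edge of the graph between vertices of Nd, connected, and |Ed| = |Nd| - 1
   (a connected graph with |E| = |V| - 1 is exactly a tree). *)
Definition is_tree (T : finType) (e : rel T) (Nd : {set T}) (Ed : {set {set T}}) : Prop :=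
  [/\ Nd != set0,
      (forall E, E \in Ed -> exists x y,
           [/\ x \in Nd, y \in Nd, x != y, e x y & E = [set x; y]]),
      (forall x y, x \in Nd -> y \in Nd -> connect (tadj Ed) x y)
    & #|Ed| = (#|Nd| - 1)%N].

Definition nbT (T : finType) (Ed : {set {set T}}) (u : T) : {set T} :=
  [set v | tadj Ed u v].

Definition dplus (T : finType) (Nd : {set T}) (Ed : {set {set T}}) : {set T} :=
  [set u in Nd | 1 < #|nbT Ed u|].

(* Colours {1,...,K} are represented by 'I_K (colour c+1 ~ ordinal c).
   Vertices of the extended graph live in V + (V * 'I_K):
   inl u = the nuclear node u, inr (u,i) = the satellite node lambda(u,i). *)
Definition extV (V : finType) (K : nat) := (V + (V * 'I_K))%type.

Section Ext.
Variables (V : finType) (e : rel V) (K : nat) (Gamma : V -> {set 'I_K}).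

(* lambda(u,i) is created iff i \in \bigcup_{v in nb_G(u)} Gamma(v) *)
Definition sat_ok (u : V) (i : 'I_K) : bool := [exists v, e u v && (i \in Gamma v)].

Definition ext_vertex (x : extV V K) : bool :=
  match x with inl _ => true | inr (u, i) => sat_ok u i end.

Definition is_satellite (x : extV V K) : bool :=
  match x with inl _ => false | inr (u, i) => sat_ok u i end.

(* generating (oriented) edges: step (iii) for nuclear node u, and step (iv)
   for the oriented edge (u,v) *)
Definition ext_gen (x y : extV V K) : bool :=
  match x, y with
  | inl u, inl v => false
  | inl u, inr (w, i) =>
      (* (iii): u -- lambda(u,i) *)
      ((w == u) && sat_ok w i)
      (* (iv): u -- lambda(v,j) for (u,v) in E, j in Gamma(u) *)
      || (e u w && (i \in Gamma u))
  | inr (u, i), inl v =>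
      (* (iv): lambda(u,i) -- v for (u,v) in E, i in Gamma(v) *)
      e u v && (i \in Gamma v)
  | inr (u, i), inr (w, j) =>
      (* (iii): pairs of distinct satellites of u *)
      [&& u == w, i != j, sat_ok u i & sat_ok u j]
      (* (iv): lambda(u,i) -- lambda(v,j), (u,v) in E, i in Gamma(v), j in Gamma(u) *)
      || [&& e u w, i \in Gamma w & j \in Gamma u]
  end.

Definition ext_edge : rel (extV V K) := fun x y => ext_gen x y || ext_gen y x.

Definition satellite_bridge (M : {set V}) (S : {set extV V K})
    (ES : {set {set extV V K}}) : Prop :=
  [/\ is_tree ext_edge S ES,
      (forall x, x \in S -> is_satellite x)
    & (forall m, m \in M -> exists2 s, s \in S & ext_edge (inl m) s)].

End Ext.

From mathcomp Require Import all_boot.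
Set Implicit Arguments. Unset Strict Implicit. Unset Printing Implicit Defensive.

(* Project SB onto the nuclear nodes: let U be the set of nuclear nodes with a
   satellite in SB and F u the colours of those satellites, so that
   \sum_u |F u| = |N(SB)|.  An edge of SB between satellites lambda(u,i) and
   lambda(w,k) with u <> w forces uw in E, i in Gamma(w) and k in Gamma(u);
   keeping the edges uw for which F u meets Gamma(w) and F w meets Gamma(u),
   U is connected because SB is, and any spanning tree of these edges satisfies
   the hitting condition.  A vertex m of M outside U sees a satellite
   lambda(w,k) of SB with wm in E and k in Gamma(m); hanging m as a leaf below
   such a w keeps the tree property, and leaves are not in d^+(R). *)

Section Trees.
Variable T : finType.
Implicit Types (r : rel T) (A B : {set T}) (Ed : {set {set T}}).

Lemma eq_set2 (a b c d : T) :
  [set a; b] = [set c; d] -> (a = c /\ b = d) \/ (a = d /\ b = c).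
Proof.
move=> E.
have : a \in [set c; d] by rewrite -E set21.
have : b \in [set c; d] by rewrite -E set22.
have : c \in [set a; b] by rewrite E set21.
have : d \in [set a; b] by rewrite E set22.
rewrite !in_set2.
by do 4!case/orP=> /eqP ?; subst; auto.
Qed.

Lemma tadj_sym Ed : symmetric (tadj Ed).
Proof. by move=> x y; rewrite /tadj setUC. Qed.

Lemma tadj_is_tree r A Ed x y :
  is_tree r A Ed -> tadj Ed x y -> [/\ x \in A, y \in A & r x y || r y x].
Proof.
case=> _ edges _ _ /edges[u [v [uA vA _ ruv /eq_set2[[-> ->]|[-> ->]]]]].
  by rewrite ruv.
by rewrite ruv orbT.
Qed.

Lemma sub_is_tree r r' A Ed : subrel r r' -> is_tree r A Ed -> is_tree r' A Ed.
Proof.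
move=> rr' [A0 edges conn cardE]; split=> // E /edges[x [y [xA yA xy rxy ->]]].
by exists x, y; split; rewrite ?rr'.
Qed.

Lemma is_tree_set1 r a : is_tree r [set a] set0.
Proof.
split; first by apply/set0Pn; exists a; rewrite set11.
- by move=> E; rewrite inE.
- by move=> x y /set1P-> /set1P->; apply: connect0.
by rewrite cards0 cards1.
Qed.

Lemma is_tree_add_leaf r B Ed x y :
  is_tree r B Ed -> x \in B -> y \notin B -> r x y ->
  is_tree r (y |: B) ([set x; y] |: Ed).
Proof.
move=> [B0 edges conn cardE] xB yB rxy.
have xy : x != y by apply: contraNneq yB => <-.
have sub_adj : subrel (tadj Ed) (connect (tadj ([set x; y] |: Ed))).
  by move=> u v uv; apply: connect1; rewrite /tadj setU1r.
have to_x u : u \in y |: B -> connect (tadj ([set x; y] |: Ed)) u x.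
  case/setU1P=> [->|uB]; first by apply: connect1; rewrite tadj_sym /tadj setU11.
  exact: connect_sub sub_adj _ _ (conn _ _ uB xB).
split.
- by apply/set0Pn; exists y; rewrite setU11.
- move=> E /setU1P[->|/edges[u [v [uB vB uv ruv ->]]]].
    by exists x, y; rewrite setU11 setU1r.
  by exists u, v; rewrite !setU1r.
- move=> u v uN vN; apply: connect_trans (to_x u uN) _.
  by rewrite (sym_connect_sym (@tadj_sym _)) to_x.
have EdN : [set x; y] \notin Ed.
  apply/negP=> /edges[u [v [uB vB _ _ Euv]]].
  have : y \in [set u; v] by rewrite -Euv set22.
  by case/set2P=> yuv; rewrite yuv ?uB ?vB in yB.
have B_pos : 0 < #|B| by apply/card_gt0P; exists x.
by rewrite !cardsU1 (negPf EdN) yB cardE subnKC // add1n subn1.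
Qed.

Lemma path_exit r B x p :
  x \in B -> path r x p -> last x p \notin B ->
  exists u v, [/\ u \in B, v \notin B & r u v].
Proof.
elim: p x => [|y p IHp] x xB /=; first by rewrite xB.
case/andP=> rxy yp yp_last.
by have [yB|yB] := boolP (y \in B); [apply: IHp yB yp yp_last | exists x, y].
Qed.

Lemma exists_spanning_tree r A :
  A != set0 -> (forall x y, r x y -> y \in A) ->
  {in A &, forall x y, connect r x y} -> exists Ed, is_tree r A Ed.
Proof.
case/set0Pn=> a aA rA connA.
suff grow n B Ed : #|A :\: B| = n -> B \subset A -> is_tree r B Ed ->
    exists Ed', is_tree r A Ed'.
  by apply: (grow _ [set a] set0 erefl); [rewrite sub1set | apply: is_tree_set1].
elim: n B Ed => [|n IHn] B Ed cardAB BA treeB.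
  suff -> : A = B by exists Ed.
  by apply/eqP; rewrite eqEsubset BA -setD_eq0 -cards_eq0 cardAB.
have /set0Pn[c /setDP[cA cB]] : A :\: B != set0 by rewrite -card_gt0 cardAB.
have [/set0Pn[b bB] _ _ _] := treeB.
have /connectP[p rp c_last] := connA _ _ (subsetP BA b bB) cA.
have [u [v [uB vB ruv]]] := path_exit bB rp (ltac:(by rewrite -c_last)).
apply: (IHn (v |: B) ([set u; v] |: Ed)).
- have vAB : v \in A :\: B by rewrite inE vB (rA u v ruv).
  by move: cardAB; rewrite (cardsD1 v) vAB setDDl setUC => -[].
- by rewrite subUset sub1set (rA u v ruv).
exact: is_tree_add_leaf treeB uB vB ruv.
Qed.
End Trees.

Lemma connect_image (T T' : finType) (r : rel T) (r' : rel T') (f : T -> T') :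
  (forall x y, r x y -> connect r' (f x) (f y)) ->
  forall x y, connect r x y -> connect r' (f x) (f y).
Proof.
move=> fr x _ /connectP[p rp ->]; elim: p x rp => [|z p IHp] x /=.
  by rewrite connect0.
by case/andP=> /fr xz /IHp; apply: connect_trans.
Qed.

Section PendantLeaves.
Variables (T : finType) (U L : {set T}) (H : rel T) (par : T -> T).

Definition pendant_rel : rel T :=
  fun x y => [|| H x y, (y \in L) && (x == par y) | (x \in L) && (y == par x)].

Hypothesis H_in : forall x y, H x y -> (x \in U) && (y \in U).
Hypothesis par_in : {in L, forall l, par l \in U}.

Lemma pendant_spanning_tree :
  U != set0 -> {in U &, forall x y, connect H x y} ->
  exists Ed, is_tree pendant_rel (U :|: L) Ed.
Proof.
move=> U0 connU; apply: exists_spanning_tree.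
- by case/set0Pn: U0 => u uU; apply/set0Pn; exists u; rewrite inE uU.
- move=> x y /or3P[/H_in/andP[_ yU]|/andP[yL _]|/andP[xL /eqP->]].
  + by rewrite inE yU.
  + by rewrite inE yL orbT.
  + by rewrite inE par_in.
have subH : subrel H pendant_rel by move=> x y Hxy; rewrite /pendant_rel Hxy.
have to_U z : z \in U :|: L ->
    exists2 u, u \in U & connect pendant_rel z u && connect pendant_rel u z.
  case/setUP=> [zU|zL]; first by exists z => //; rewrite connect0.
  exists (par z); first exact: par_in.
  by rewrite !connect1 // /pendant_rel zL eqxx ?orbT.
move=> x y /to_U[u uU /andP[xu _]] /to_U[v vU /andP[_ vy]].
apply: connect_trans xu (connect_trans _ vy).
by apply: connect_sub (connU _ _ uU vU) => a b /subH; apply: connect1.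
Qed.

Lemma pendant_leaf_degree Ed l :
  is_tree pendant_rel (U :|: L) Ed -> l \notin U -> #|nbT Ed l| <= 1.
Proof.
move=> tree lU; rewrite -(cards1 (par l)) subset_leq_card //.
apply/subsetP=> w; rewrite !inE => /(tadj_is_tree tree)[_ _].
have notH x y : H x y -> (x != l) && (y != l).
  by case/H_in/andP=> xU yU; apply/andP; split; apply: contraNneq lU => <-.
have par_ne_l x : x \in L -> l != par x.
  by move=> xL; apply: contraNneq lU => ->; apply: par_in.
case/orP=> [/or3P[/notH|/andP[wL]|/andP[_ /eqP //]]
          |/or3P[/notH|/andP[_ /eqP //]|/andP[wL]]].
- by rewrite eqxx.
- by rewrite (negPf (par_ne_l w wL)).
- by rewrite eqxx andbF.
- by rewrite (negPf (par_ne_l w wL)).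
Qed.

End PendantLeaves.

Section SatelliteBridge.
Variables (V : finType) (e : rel V) (K : nat) (Gamma : V -> {set 'I_K}).
Hypothesis e_sym : symmetric e.

Lemma ext_edge_satellites u i w k :
  ext_edge e Gamma (inr (u, i)) (inr (w, k)) ->
  u = w \/ [&& e u w, i \in Gamma w & k \in Gamma u].
Proof.
rewrite /ext_edge /ext_gen.
case/or3P=> [/orP[/and4P[/eqP uw _ _ _]|]|/and4P[/eqP wu _ _ _]|].
- by left.
- by right.
- by left.
by case/and3P=> ewu hk hi; right; rewrite e_sym ewu hi hk.
Qed.

Lemma ext_edge_nuclear_satellite m w k :
  ext_edge e Gamma (inl m) (inr (w, k)) -> m = w \/ e w m && (k \in Gamma m).
Proof.
rewrite /ext_edge /= => /orP[/orP[/andP[/eqP-> _]|/andP[emw hk]]|//]; first by left.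
  by right; rewrite e_sym emw.
by right.
Qed.

Definition nucleus (x : extV V K) : V := match x with inl u => u | inr (u, _) => u end.

Variable S : {set extV V K}.

Definition sat_colours (u : V) : {set 'I_K} := [set i | inr (u, i) \in S].

Definition bridge_support : {set V} := [set u | sat_colours u != set0].

Definition bridge_rel : rel V := fun u w =>
  [&& e u w, sat_colours u :&: Gamma w != set0 & sat_colours w :&: Gamma u != set0].

Lemma sum_card_sat_colours : \sum_u #|sat_colours u| <= #|S|.
Proof.
pose P : {set V * 'I_K} := [set p | inr p \in S].
have -> : \sum_u #|sat_colours u| = #|P|.
  rewrite -sum1_card (eq_bigl (fun p => xpredT p.1 && (inr (p.1, p.2) \in S)));
    last by move=> [u i]; rewrite inE.
  rewrite -(pair_big_dep xpredT (fun u i => inr (u, i) \in S) (fun _ _ => 1)).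
  by apply: eq_bigr => u _; rewrite sum1_card cardsE.
rewrite -(card_imset P (@inr_inj V (V * 'I_K))) subset_leq_card //.
by apply/subsetP=> _ /imsetP[p pP ->]; rewrite inE in pP.
Qed.

Lemma bridge_rel_support u w :
  bridge_rel u w -> (u \in bridge_support) && (w \in bridge_support).
Proof.
case/and3P=> _ /set0Pn[i /setIP[iu _]] /set0Pn[j /setIP[jw _]].
by rewrite !inE; apply/andP; split; apply/set0Pn; [exists i | exists j].
Qed.

Definition bridge_parent (m : V) : V :=
  odflt m [pick w | [&& w \in bridge_support, e w m
                    & sat_colours w :&: Gamma m != set0]].

Variables (M : {set V}) (ES : {set {set extV V K}}).
Hypothesis SB : satellite_bridge e Gamma M S ES.

Lemma bridge_satellite x :
  x \in S -> exists u i, x = inr (u, i) /\ u \in bridge_support.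
Proof.
case: SB => _ sat _; case: x => [m /sat //|[u i] xS].
exists u, i; split => //; rewrite inE; apply/set0Pn; exists i; by rewrite inE.
Qed.

Lemma bridge_support_nonempty : bridge_support != set0.
Proof.
case: SB => [[/set0Pn[x /bridge_satellite[u [i [_ uU]]]] _ _ _] _ _].
by apply/set0Pn; exists u.
Qed.

Lemma bridge_step a b :
  tadj ES a b -> connect bridge_rel (nucleus a) (nucleus b).
Proof.
have [treeS _ _] := SB; case/(tadj_is_tree treeS)=> aS bS ab.
have [u [i [aE _]]] := bridge_satellite aS; have [w [k [bE _]]] := bridge_satellite bS.
subst a b.
have /ext_edge_satellites[<-|/and3P[euw iw ku]] :
    ext_edge e Gamma (inr (u, i)) (inr (w, k)).
- by case/orP: ab => //; rewrite /ext_edge orbC.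
- exact: connect0.
apply: connect1; rewrite /bridge_rel euw /=.
by apply/andP; split; apply/set0Pn; [exists i | exists k]; rewrite !inE ?aS ?bS ?iw ?ku.
Qed.

Lemma bridge_support_connected :
  {in bridge_support &, forall u v, connect bridge_rel u v}.
Proof.
move=> u v; rewrite !inE => /set0Pn[i] + /set0Pn[j]; rewrite !inE => uS vS.
have [[_ _ connS _] _ _] := SB.
exact: connect_image bridge_step _ _ (connS _ _ uS vS).
Qed.

Lemma bridge_parentP m :
  m \in M :\: bridge_support ->
  [&& bridge_parent m \in bridge_support, e (bridge_parent m) m
    & sat_colours (bridge_parent m) :&: Gamma m != set0].
Proof.
case/setDP=> mM mU; rewrite /bridge_parent; case: pickP => [w //|none].
have [_ _ /(_ m mM)[x xS]] := SB.
have [w [k [xE wU]]] := bridge_satellite xS; subst x.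
case/ext_edge_nuclear_satellite => [mw|/andP[ewm km]]; first by rewrite mw wU in mU.
have hit : sat_colours w :&: Gamma m != set0.
  by apply/set0Pn; exists k; rewrite !inE xS.
by move: (none w); rewrite wU ewm hit.
Qed.

Definition bridge_tree_rel : rel V :=
  pendant_rel (M :\: bridge_support) bridge_rel bridge_parent.

Lemma bridge_tree_rel_sub : subrel bridge_tree_rel e.
Proof.
move=> x y /or3P[/and3P[//]|/andP[yL /eqP->]|/andP[xL /eqP->]].
- by case/and3P: (bridge_parentP yL).
by case/and3P: (bridge_parentP xL) => _; rewrite e_sym.
Qed.

Lemma bridge_spanning_tree :
  exists Ed, is_tree bridge_tree_rel (bridge_support :|: M :\: bridge_support) Ed.
Proof.
apply: pendant_spanning_tree bridge_support_nonempty bridge_support_connected.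
- exact: bridge_rel_support.
by move=> m /bridge_parentP/and3P[].
Qed.

Lemma bridge_tree_hits Ed :
  is_tree bridge_tree_rel (bridge_support :|: M :\: bridge_support) Ed ->
  forall u, u \in dplus (bridge_support :|: M :\: bridge_support) Ed ->
  forall v, v \in nbT Ed u -> sat_colours u :&: Gamma v != set0.
Proof.
move=> tree u /setIdP[_ deg_u] v; rewrite inE => /(tadj_is_tree tree)[_ _].
have uL : u \notin M :\: bridge_support.
  apply: contraTN deg_u => /setDP[_ uU]; rewrite -leqNgt.
  apply: pendant_leaf_degree tree uU; first exact: bridge_rel_support.
  by move=> m /bridge_parentP/and3P[].
have parent_hits m : m \in M :\: bridge_support ->
    sat_colours (bridge_parent m) :&: Gamma m != set0.
  by case/bridge_parentP/and3P.
case/orP=> [/or3P[/and3P[_ hit _]|/andP[vL /eqP->]|/andP[uL' _]]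
          |/or3P[/and3P[_ _ hit]|/andP[uL' _]|/andP[vL /eqP->]]].
- exact: hit.
- exact: parent_hits.
- by rewrite uL' in uL.
- exact: hit.
- by rewrite uL' in uL.
- exact: parent_hits.
Qed.

End SatelliteBridge.

Theorem lemma4 (V : finType) (e : rel V) (K : nat) (Gamma : V -> {set 'I_K})
  (e_sym : symmetric e) (e_irr : irreflexive e)
  (G_conn : forall u v : V, connect e u v)
  (V_ge2 : 1 < #|V|)
  (Gamma_ne : forall u, Gamma u != set0)
  (M : {set V}) (S : {set extV V K}) (ES : {set {set extV V K}})
  (SB : satellite_bridge e Gamma M S ES) :
  exists (NR : {set V}) (ER : {set {set V}}),
    [/\ is_tree e NR ER, M \subset NR &
      exists F : V -> {set 'I_K},
        (forall u, u \in dplus NR ER ->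
           forall v, v \in nbT ER u -> F u :&: Gamma v != set0)
        /\ \sum_(u in dplus NR ER) #|F u| <= #|S|].
Proof.
have [Ed tree] := bridge_spanning_tree e_sym SB.
set NR := bridge_support S :|: M :\: bridge_support S in tree *.
exists NR, Ed; split.
- exact: sub_is_tree (bridge_tree_rel_sub e_sym SB) tree.
- by apply/subsetP=> m mM; rewrite !inE mM andbT orbN.
exists (sat_colours S); split; first exact: (bridge_tree_hits e_sym SB tree).
apply: leq_trans _ (sum_card_sat_colours S).
by rewrite [leqRHS](bigID (mem (dplus NR Ed))) leq_addr.
Qed.
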